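(* There exists a $2$-isometry $T\in B(\ell^2)$ such that for every $\lambda\in(0,1)$ and every $m\ge2$, the $\lambda$-Aluthge transform $\Delta_\lambda(T)$ is not an $m$-isometry. (For instance, the weighted shift with weights $a_j=\sqrt{(j+1)/j}$, $j\ge1$.)
   Context: $\ell^2$ has canonical basis $(e_j)_{j\ge1}$; the weighted shift associated to a bounded complex sequence $(a_j)_{j\ge1}$ is the operator $T\in B(\ell^2)$ with $Te_j=a_je_{j+1}$. For $T\in B(H)$ with polar decomposition $T=V|T|$ ($|T|=(T^*T)^{1/2}$, $V$ the partial isometry with $\ker V=\ker T$) and $\lambda\in[0,1]$, the $\lambda$-Aluthge transform is $\Delta_\lambda(T)=|T|^\lambda V|T|^{1-\lambda}$. For $m\ge1$, $T$ is an $m$-isometry if $\sum_{k=0}^m(-1)^k\binom{m}{k}\|T^kx\|^2=0$ for all $x\in H$. *)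

From Stdlib Require Import Reals List.
From Coquelicot Require Import Coquelicot.
Open Scope R_scope.

(** Sequences of complex numbers; l^2 is the subset of square-summable ones.
    Index j : nat starts at 0 (the paper's e_1 is our index 0). *)
Definition seqC := nat -> C.

Definition zeroS : seqC := fun _ => 0%C.
Definition addS (x y : seqC) : seqC := fun n => (x n + y n)%C.
Definition scaleS (a : C) (x : seqC) : seqC := fun n => (a * x n)%C.
Definition subS (x y : seqC) : seqC := fun n => (x n - y n)%C.

Definition in_l2 (x : seqC) : Prop := ex_series (fun n => (Cmod (x n)) ^ 2).

Definition l2norm (x : seqC) : R := sqrt (Series (fun n => (Cmod (x n)) ^ 2)).

(** inner product <x,y> = sum_n x_n * conj(y_n) (real and imaginary parts
    summed separately; both series converge absolutely on l^2). *)
Definition inner (x y : seqC) : C :=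
  (Series (fun n => Re (x n * Cconj (y n))%C),
   Series (fun n => Im (x n * Cconj (y n))%C)).

(** Operators are maps on sequences; only their values on l^2 matter. *)
Definition op := seqC -> seqC.

Definition op_linear (T : op) : Prop :=
  forall x y a, in_l2 x -> in_l2 y -> T (addS x (scaleS a y)) = addS (T x) (scaleS a (T y)).

Definition bounded_op (T : op) : Prop :=
  op_linear T /\ (forall x, in_l2 x -> in_l2 (T x)) /\
  exists M, forall x, in_l2 x -> l2norm (T x) <= M * l2norm x.

Definition is_adjoint (T Ts : op) : Prop :=
  bounded_op Ts /\
  forall x y, in_l2 x -> in_l2 y -> inner (T x) y = inner x (Ts y).

Definition positive_op (S : op) : Prop :=
  forall x, in_l2 x -> Im (inner (S x) x) = 0 /\ 0 <= Re (inner (S x) x).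

Definition is_modulus (T S : op) : Prop :=
  bounded_op S /\ positive_op S /\
  exists Ts, is_adjoint T Ts /\ forall x, in_l2 x -> S (S x) = Ts (T x).

Definition partial_isometry (V : op) : Prop :=
  bounded_op V /\
  forall x, in_l2 x ->
    (forall y, in_l2 y -> V y = zeroS -> inner x y = 0%C) ->
    l2norm (V x) = l2norm x.

Definition is_polar_isometry (T S V : op) : Prop :=
  partial_isometry V /\
  (forall x, in_l2 x -> (V x = zeroS <-> T x = zeroS)) /\
  (forall x, in_l2 x -> T x = V (S x)).

(** real power t^lam on [0,oo) (with 0^lam = 0, lam > 0). *)
Definition rpow (t lam : R) : R := if Rlt_dec 0 t then Rpower t lam else 0.

Fixpoint peval (cs : list R) (t : R) : R :=
  match cs with nil => 0 | c :: cs' => c + t * peval cs' t end.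

Fixpoint op_poly (cs : list R) (S : op) (x : seqC) : seqC :=
  match cs with
  | nil => zeroS
  | c :: cs' => addS (scaleS (RtoC c) x) (S (op_poly cs' S x))
  end.

(** P = S^lam, via continuous functional calculus: whenever polynomials p_n
    converge uniformly to t^lam on [0,M] (M a bound for S, hence containing
    the spectrum of the positive operator S), p_n(S) -> P strongly. *)
Definition is_frac_pow (S : op) (lam : R) (P : op) : Prop :=
  bounded_op P /\
  forall M, 0 <= M -> (forall x, in_l2 x -> l2norm (S x) <= M * l2norm x) ->
  forall ps : nat -> list R,
    (forall eps, 0 < eps -> exists N, forall n, (N <= n)%nat ->
       forall t, 0 <= t <= M -> Rabs (peval (ps n) t - rpow t lam) <= eps) ->
    forall x, in_l2 x -> is_lim_seq (fun n => l2norm (subS (op_poly (ps n) S x) (P x))) 0.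

Definition is_aluthge (lam : R) (T D : op) : Prop :=
  exists S V P Q,
    is_modulus T S /\ is_polar_isometry T S V /\
    is_frac_pow S lam P /\ is_frac_pow S (1 - lam) Q /\
    forall x, in_l2 x -> D x = P (V (Q x)).

Definition m_isometry (m : nat) (T : op) : Prop :=
  bounded_op T /\
  forall x, in_l2 x ->
    sum_f_R0 (fun k => (-1) ^ k * Binomial.C m k * (l2norm (Nat.iter k T x)) ^ 2) m = 0.

(* The witness is the weighted shift [T e_n = a_n e_(n+1)] with
   [a_n^2 = (n+2)/(n+1)]; since [1 - 2 a_n^2 + a_n^2 a_(n+1)^2 = 0] it is a
   2-isometry.  Its modulus is [diag a] and its polar part the unilateral
   shift, so [Delta_lam(T)] is the weighted shift with weights
   [b_n = a_n^(1-lam) a_(n+1)^lam].  Conversely any operators satisfying the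
   defining relations of the Aluthge transform act this way on the basis: the
   eigenvalues [a_n^2] of [T^* T] are simple, and fractional powers are pinned
   down by Bernstein approximation of [t^lam].  Hence
   [||Delta^k e_j||^2 = g(j+k) / g(j)] with [g(n) = (n+1)^(1-lam) (n+2)^lam],
   and an m-isometry would make the m-th finite difference of [g] vanish.
   But [g] is increasing and strictly concave (weighted AM-GM), so its second
   differences are negative yet tend to 0, which rules this out. *)

From Stdlib Require Import Reals Lra Lia Psatz List ZArith.
From Stdlib Require Import FunctionalExtensionality IndefiniteDescription.
From Coquelicot Require Import Coquelicot.
Open Scope R_scope.

Definition poly_fun (f : R -> R) : Prop := exists cs, forall t, peval cs t = f t.

Lemma poly_fun_const c : poly_fun (fun _ => c).
Proof. exists (c :: nil); intro t; simpl; ring. Qed.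

Lemma poly_fun_ext f g : poly_fun f -> (forall t, f t = g t) -> poly_fun g.
Proof. intros [cs Hcs] Hfg; exists cs; intro t; rewrite Hcs; apply Hfg. Qed.

Lemma poly_fun_add f g : poly_fun f -> poly_fun g -> poly_fun (fun t => f t + g t).
Proof.
  assert (Hadd : forall p q, exists r, forall t, peval r t = peval p t + peval q t).
  { induction p as [|a p IH]; intros [|b q].
    - exists nil; intro; simpl; ring.
    - exists (b :: q); intro; simpl; ring.
    - exists (a :: p); intro; simpl; ring.
    - destruct (IH q) as [r Hr]; exists (a + b :: r); intro t; simpl; rewrite Hr; ring. }
  intros [p Hp] [q Hq]; destruct (Hadd p q) as [r Hr].
  exists r; intro t; rewrite Hr, Hp, Hq; reflexivity.
Qed.

Lemma poly_fun_scal c f : poly_fun f -> poly_fun (fun t => c * f t).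
Proof.
  intros [p Hp]; exists (map (Rmult c) p); intro t; rewrite <- Hp; clear Hp.
  induction p as [|a p IH]; simpl; [ring|]; rewrite IH; ring.
Qed.

Lemma poly_fun_mulX f : poly_fun f -> poly_fun (fun t => t * f t).
Proof. intros [p Hp]; exists (0 :: p); intro t; simpl; rewrite Hp; ring. Qed.

Lemma poly_fun_mul_affine a b f :
  poly_fun f -> poly_fun (fun t => (a + b * t) * f t).
Proof.
  intro Hf; apply poly_fun_ext with (fun t => a * f t + b * (t * f t)).
  - apply poly_fun_add; apply poly_fun_scal; [exact Hf|apply poly_fun_mulX, Hf].
  - intro t; ring.
Qed.

Lemma poly_fun_sum (F : nat -> R -> R) n :
  (forall k, poly_fun (F k)) -> poly_fun (fun t => sum_f_R0 (fun k => F k t) n).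
Proof. intro HF; induction n as [|n IH]; simpl; [apply HF|apply poly_fun_add; auto]. Qed.

Fixpoint bernstein_basis (n k : nat) (x : R) : R :=
  match n, k with
  | O, O => 1
  | O, S _ => 0
  | S n', O => (1 - x) * bernstein_basis n' O x
  | S n', S k' => (1 - x) * bernstein_basis n' (S k') x + x * bernstein_basis n' k' x
  end.

Lemma bernstein_basis_ge0 n k x : 0 <= x <= 1 -> 0 <= bernstein_basis n k x.
Proof.
  intro Hx; revert k; induction n as [|n IH]; intros [|k]; simpl; try lra.
  - apply Rmult_le_pos; [lra|apply IH].
  - apply Rplus_le_le_0_compat; apply Rmult_le_pos; try lra; apply IH.
Qed.

Lemma bernstein_basis_out n k x : (n < k)%nat -> bernstein_basis n k x = 0.
Proof.
  revert k; induction n as [|n IH]; intros [|k] Hk; simpl; try lia; [reflexivity|].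
  rewrite !IH by lia; ring.
Qed.

Lemma poly_fun_bernstein_basis n k M :
  poly_fun (fun t => bernstein_basis n k (t / M)).
Proof.
  revert k; induction n as [|n IH]; intros [|k]; simpl; try apply poly_fun_const.
  - apply poly_fun_ext with (fun t => (1 + - / M * t) * bernstein_basis n 0 (t / M)).
    + apply poly_fun_mul_affine, IH.
    + intro t; unfold Rdiv; ring.
  - apply poly_fun_ext with (fun t => (1 + - / M * t) * bernstein_basis n (S k) (t / M)
                                      + (0 + / M * t) * bernstein_basis n k (t / M)).
    + apply poly_fun_add; apply poly_fun_mul_affine, IH.
    + intro t; unfold Rdiv; ring.
Qed.

Lemma sum_f_R0_lin (f g : nat -> R) a b n :
  sum_f_R0 (fun k => a * f k + b * g k) n = a * sum_f_R0 f n + b * sum_f_R0 g n.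
Proof. induction n as [|n IH]; simpl; [|rewrite IH]; ring. Qed.

Lemma bernstein_sum_succ (g : nat -> R) n x :
  sum_f_R0 (fun k => g k * bernstein_basis (S n) k x) (S n) =
  (1 - x) * sum_f_R0 (fun k => g k * bernstein_basis n k x) n
  + x * sum_f_R0 (fun k => g (S k) * bernstein_basis n k x) n.
Proof.
  rewrite decomp_sum by lia; simpl pred.
  assert (Hhead : sum_f_R0 (fun k => g k * bernstein_basis n k x) n =
                  g O * bernstein_basis n O x
                  + sum_f_R0 (fun k => g (S k) * bernstein_basis n (S k) x) n).
  { transitivity (sum_f_R0 (fun k => g k * bernstein_basis n k x) (S n)).
    - rewrite tech5, (bernstein_basis_out n (S n)) by lia; ring.
    - rewrite decomp_sum by lia; reflexivity. }
  rewrite Hhead, (sum_eq _ (fun k => (1 - x) * (g (S k) * bernstein_basis n (S k) x)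
                                  + x * (g (S k) * bernstein_basis n k x)))
    by (intros; simpl; ring).
  rewrite sum_f_R0_lin; simpl; ring.
Qed.

Lemma bernstein_moment0 n x : sum_f_R0 (fun k => 1 * bernstein_basis n k x) n = 1.
Proof. induction n as [|n IH]; [simpl; ring|]; rewrite bernstein_sum_succ, IH; ring. Qed.

Lemma bernstein_moment1 n x :
  sum_f_R0 (fun k => INR k * bernstein_basis n k x) n = INR n * x.
Proof.
  induction n as [|n IH]; [simpl; ring|]; rewrite bernstein_sum_succ, IH.
  rewrite (sum_eq _ (fun k => 1 * (INR k * bernstein_basis n k x)
                              + 1 * (1 * bernstein_basis n k x)))
    by (intros; rewrite S_INR; ring).
  rewrite sum_f_R0_lin, IH, bernstein_moment0, S_INR; ring.
Qed.

Lemma bernstein_moment2 n x :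
  sum_f_R0 (fun k => INR k ^ 2 * bernstein_basis n k x) n
  = INR n * x * (1 - x) + INR n ^ 2 * x ^ 2.
Proof.
  induction n as [|n IH]; [simpl; ring|]; rewrite bernstein_sum_succ, IH.
  rewrite (sum_eq _ (fun k => 1 * (INR k ^ 2 * bernstein_basis n k x)
        + 1 * (2 * (INR k * bernstein_basis n k x) + 1 * (1 * bernstein_basis n k x))))
    by (intros; rewrite S_INR; ring).
  rewrite !sum_f_R0_lin, IH, bernstein_moment0, bernstein_moment1, S_INR; ring.
Qed.

Lemma bernstein_variance n x : (0 < n)%nat ->
  sum_f_R0 (fun k => (INR k / INR n - x) ^ 2 * bernstein_basis n k x) n
  = x * (1 - x) / INR n.
Proof.
  intro Hn; assert (0 < INR n) by (apply lt_0_INR; lia).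
  rewrite (sum_eq _ (fun k => / INR n ^ 2 * (INR k ^ 2 * bernstein_basis n k x)
        + 1 * (- 2 * x / INR n * (INR k * bernstein_basis n k x)
               + x ^ 2 * (1 * bernstein_basis n k x))))
    by (intros; field; lra).
  rewrite !sum_f_R0_lin, bernstein_moment0, bernstein_moment1, bernstein_moment2.
  field; lra.
Qed.

Definition bernstein (f : R -> R) (n : nat) (x : R) : R :=
  sum_f_R0 (fun k => f (INR k / INR n) * bernstein_basis n k x) n.

Lemma INR_unbounded r : exists N : nat, r < INR N.
Proof.
  destruct (Rle_or_lt r 0) as [Hr|Hr]; [exists 1%nat; simpl; lra|].
  destruct (archimed r) as [Hup _]; exists (Z.to_nat (up r)).
  rewrite INR_IZR_INZ, Z2Nat.id; [lra|]; apply le_IZR; lra.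
Qed.

(* Uniform continuity on [0,1], in the form [|f u - f v| <= eps + C (u - v)^2]
   that matches the variance bound of the Bernstein weights. *)
Theorem bernstein_uniform (f : R -> R) :
  (forall eps, 0 < eps -> exists C, forall u v, 0 <= u <= 1 -> 0 <= v <= 1 ->
     Rabs (f u - f v) <= eps + C * (u - v) ^ 2) ->
  forall eps, 0 < eps -> exists N, forall n, (N <= n)%nat -> forall x, 0 <= x <= 1 ->
     Rabs (bernstein f n x - f x) <= eps.
Proof.
  intros Hf eps Heps.
  destruct (Hf (eps / 2)) as [C HC]; [lra|].
  destruct (INR_unbounded (Rabs C * 2 / eps)) as [N HN].
  exists (S N); intros n Hn x Hx.
  assert (HnR : 0 < INR n) by (apply lt_0_INR; lia).
  assert (HNn : INR N < INR n) by (apply lt_INR; lia).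
  assert (HCa : 0 <= Rabs C) by apply Rabs_pos.
  unfold bernstein.
  replace (f x) with (f x * sum_f_R0 (fun k => 1 * bernstein_basis n k x) n)
    by (rewrite bernstein_moment0; ring).
  rewrite scal_sum, <- minus_sum.
  eapply Rle_trans; [apply sum_f_R0_triangle|].
  apply Rle_trans with (sum_f_R0 (fun k => eps / 2 * (1 * bernstein_basis n k x)
          + Rabs C * ((INR k / INR n - x) ^ 2 * bernstein_basis n k x)) n).
  { apply sum_Rle; intros k Hk.
    assert (Hb := bernstein_basis_ge0 n k x Hx).
    assert (Hk1 : 0 <= INR k / INR n <= 1).
    { split; [apply Rdiv_le_0_compat; [apply pos_INR|lra]|].
      apply Rmult_le_reg_r with (INR n); [lra|].
      unfold Rdiv; rewrite Rmult_assoc, Rinv_l, Rmult_1_r, Rmult_1_l by lra.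
      apply le_INR; lia. }
    specialize (HC _ _ Hk1 Hx).
    assert (C * (INR k / INR n - x) ^ 2 <= Rabs C * (INR k / INR n - x) ^ 2)
      by (apply Rmult_le_compat_r; [apply pow2_ge_0|apply RRle_abs]).
    replace (f (INR k / INR n) * bernstein_basis n k x - 1 * bernstein_basis n k x * f x)
      with ((f (INR k / INR n) - f x) * bernstein_basis n k x) by ring.
    rewrite Rabs_mult, (Rabs_right (bernstein_basis n k x)) by lra.
    nra. }
  rewrite sum_f_R0_lin, bernstein_moment0, bernstein_variance by lia.
  assert (Rabs C * (x * (1 - x) / INR n) <= eps / 2).
  { assert (0 <= x * (1 - x) <= 1) by nra.
    apply Rmult_le_reg_r with (INR n); [lra|].
    replace (Rabs C * (x * (1 - x) / INR n) * INR n) with (Rabs C * (x * (1 - x)))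
      by (field; lra).
    assert (Rabs C * 2 < INR n * eps).
    { apply (Rmult_lt_compat_r eps) in HN; [|lra].
      replace (Rabs C * 2 / eps * eps) with (Rabs C * 2) in HN by (field; lra); nra. }
    nra. }
  lra.
Qed.

Lemma Rpower_gt0 t p : 0 < Rpower t p.
Proof. apply exp_pos. Qed.

Lemma rpow_pos_eq t p : 0 < t -> rpow t p = Rpower t p.
Proof. intro Ht; unfold rpow; destruct (Rlt_dec 0 t); [reflexivity|lra]. Qed.

Lemma rpow_nonpos t p : t <= 0 -> rpow t p = 0.
Proof. intro Ht; unfold rpow; destruct (Rlt_dec 0 t); [lra|reflexivity]. Qed.

Lemma rpow_ge0 t p : 0 <= rpow t p.
Proof. unfold rpow; destruct (Rlt_dec 0 t); [left; apply Rpower_gt0|lra]. Qed.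

Lemma rpow_le_compat a b p : 0 <= p -> 0 <= b <= a -> rpow b p <= rpow a p.
Proof.
  intros Hp [[Hb|<-] Hba].
  - rewrite !rpow_pos_eq by lra; apply Rle_Rpower_l; lra.
  - rewrite rpow_nonpos by lra; apply rpow_ge0.
Qed.

Lemma rpow_subadditive a b p : 0 < p <= 1 -> 0 <= a -> 0 <= b ->
  rpow (a + b) p <= rpow a p + rpow b p.
Proof.
  intros Hp [Ha|<-] [Hb|<-];
    try (rewrite ?Rplus_0_l, ?Rplus_0_r, (rpow_nonpos 0) by lra; lra).
  rewrite !rpow_pos_eq by lra.
  assert (Hsplit : forall x, 0 < x -> Rpower x p = x * Rpower x (p - 1)).
  { intros x Hx; replace p with (1 + (p - 1)) at 1 by ring.
    rewrite Rpower_plus, Rpower_1; auto. }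
  assert (Hanti : forall x, 0 < x <= a + b -> Rpower (a + b) (p - 1) <= Rpower x (p - 1)).
  { intros x Hx; unfold Rpower.
    assert (ln x <= ln (a + b)) by (apply ln_le; lra).
    assert (E : (p - 1) * ln (a + b) <= (p - 1) * ln x) by nra.
    destruct E as [E|E]; [left; apply exp_increasing, E|rewrite E; lra]. }
  rewrite (Hsplit (a + b)), (Hsplit a), (Hsplit b) by lra.
  assert (Rpower (a + b) (p - 1) <= Rpower a (p - 1)) by (apply Hanti; lra).
  assert (Rpower (a + b) (p - 1) <= Rpower b (p - 1)) by (apply Hanti; lra).
  nra.
Qed.

Lemma rpow_holder a b p : 0 < p <= 1 -> 0 <= a -> 0 <= b ->
  Rabs (rpow a p - rpow b p) <= rpow (Rabs (a - b)) p.
Proof.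
  intros Hp Ha Hb.
  assert (Hle : forall x y, 0 <= y <= x -> Rabs (rpow x p - rpow y p) <= rpow (x - y) p).
  { intros x y Hxy.
    assert (rpow y p <= rpow x p) by (apply rpow_le_compat; lra).
    assert (rpow (y + (x - y)) p <= rpow y p + rpow (x - y) p)
      by (apply rpow_subadditive; lra).
    replace (y + (x - y)) with x in * by ring.
    rewrite Rabs_right; lra. }
  destruct (Rle_or_lt b a).
  - rewrite (Rabs_right (a - b)) by lra; apply Hle; lra.
  - rewrite Rabs_minus_sym, (Rabs_left (a - b)) by lra.
    replace (- (a - b)) with (b - a) by ring; apply Hle; lra.
Qed.

Lemma rpow_poly_approx p M : 0 < p <= 1 -> 0 < M ->
  exists ps : nat -> list R, forall eps, 0 < eps -> exists N, forall n, (N <= n)%nat ->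
    forall t, 0 <= t <= M -> Rabs (peval (ps n) t - rpow t p) <= eps.
Proof.
  intros Hp HM.
  set (f u := rpow (M * u) p).
  assert (Hpoly : forall n, poly_fun (fun t => bernstein f n (t / M))).
  { intro n; apply poly_fun_sum; intro k.
    apply poly_fun_scal, poly_fun_bernstein_basis. }
  exists (fun n => proj1_sig (constructive_indefinite_description _ (Hpoly n))).
  (* Hölder continuity of [f] gives the modulus required by [bernstein_uniform]:
     below the scale [d = eps^(1/p)] it is at most [eps], above it the
     quadratic term dominates. *)
  assert (Hmod : forall eps, 0 < eps -> exists C, forall u v, 0 <= u <= 1 -> 0 <= v <= 1 ->
            Rabs (f u - f v) <= eps + C * (u - v) ^ 2).
  { intros eps Heps.
    set (d := Rpower eps (/ p)).
    assert (Hd : 0 < d) by apply Rpower_gt0.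
    assert (Hdp : rpow d p = eps).
    { rewrite rpow_pos_eq by exact Hd; unfold d; rewrite Rpower_mult.
      replace (/ p * p) with 1 by (field; lra); apply Rpower_1, Heps. }
    set (K := rpow M p).
    assert (HK : 0 <= K) by apply rpow_ge0.
    exists (K * M ^ 2 / d ^ 2); intros u v Hu Hv; unfold f.
    eapply Rle_trans; [apply rpow_holder; nra|].
    rewrite <- Rmult_minus_distr_l, Rabs_mult, (Rabs_right M) by lra.
    assert (Hz : 0 <= M * Rabs (u - v) <= M).
    { assert (0 <= Rabs (u - v) <= 1) by (split; [apply Rabs_pos|apply Rabs_le; lra]); nra. }
    assert (Hq : 0 <= K * M ^ 2 / d ^ 2 * (u - v) ^ 2).
    { apply Rmult_le_pos; [apply Rdiv_le_0_compat; [nra|nra]|apply pow2_ge_0]. }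
    destruct (Rle_or_lt (M * Rabs (u - v)) d) as [Hs|Hs].
    - assert (rpow (M * Rabs (u - v)) p <= rpow d p) by (apply rpow_le_compat; lra); lra.
    - assert (rpow (M * Rabs (u - v)) p <= K) by (apply rpow_le_compat; lra).
      assert (1 <= (M * Rabs (u - v)) ^ 2 / d ^ 2).
      { apply Rmult_le_reg_r with (d ^ 2); [nra|].
        unfold Rdiv; rewrite Rmult_assoc, Rinv_l by nra; nra. }
      replace (K * M ^ 2 / d ^ 2 * (u - v) ^ 2) with (K * ((M * Rabs (u - v)) ^ 2 / d ^ 2))
        by (rewrite Rpow_mult_distr, pow2_abs; field; lra).
      nra. }
  intros eps Heps.
  destruct (bernstein_uniform f Hmod eps Heps) as [N HN].
  exists N; intros n Hn t Ht.
  destruct (constructive_indefinite_description _ (Hpoly n)) as [cs Hcs]; simpl.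
  rewrite Hcs.
  assert (Ht' : 0 <= t / M <= 1).
  { split; [apply Rdiv_le_0_compat; lra|].
    apply Rmult_le_reg_r with M; [lra|]; unfold Rdiv; rewrite Rmult_assoc, Rinv_l; lra. }
  specialize (HN n Hn _ Ht'); unfold f at 2 in HN.
  replace (M * (t / M)) with t in HN by (field; lra); exact HN.
Qed.

Tactic Notation "seq_ext" := apply functional_extensionality; intro.
Tactic Notation "seq_ext" simple_intropattern(p) := apply functional_extensionality; intros p.

Lemma ex_series_ext_R (a b : nat -> R) : (forall n, a n = b n) -> ex_series a -> ex_series b.
Proof. apply ex_series_ext. Qed.

Lemma ex_series_le_nonneg (a b : nat -> R) :
  (forall n, 0 <= a n <= b n) -> ex_series b -> ex_series a.
Proof.
  intros Hab; apply (ex_series_le a b); intro n.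
  rewrite Rabs_pos_eq; apply Hab.
Qed.

Lemma ex_series_lincomb (a b : nat -> R) c d :
  ex_series a -> ex_series b -> ex_series (fun n => c * a n + d * b n).
Proof.
  intros Ha Hb; apply (ex_series_ext (fun n => plus (scal c (a n)) (scal d (b n))));
    [reflexivity|].
  apply (@ex_series_plus R_AbsRing R_NormedModule);
    apply (@ex_series_scal_l R_AbsRing R_NormedModule); assumption.
Qed.

Lemma ex_series_scal_R c (a : nat -> R) : ex_series a -> ex_series (fun n => c * a n).
Proof. apply (@ex_series_scal_l R_AbsRing R_NormedModule). Qed.

Lemma Series_lincomb (a b : nat -> R) c d : ex_series a -> ex_series b ->
  Series (fun n => c * a n + d * b n) = c * Series a + d * Series b.
Proof.
  intros Ha Hb; rewrite Series_plus, !Series_scal_l; [reflexivity| |];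
    apply (@ex_series_scal_l R_AbsRing R_NormedModule); assumption.
Qed.

Lemma Series_zero : Series (fun _ => 0) = 0.
Proof.
  transitivity (Series (fun _ : nat => 0 * 0)); [apply Series_ext; intro; ring|].
  rewrite (Series_scal_l 0 (fun _ => 0)); ring.
Qed.

Lemma Series_ge0 (a : nat -> R) : (forall n, 0 <= a n) -> ex_series a -> 0 <= Series a.
Proof. intros Ha Hex; rewrite <- Series_zero; apply Series_le; auto; split; [lra|apply Ha]. Qed.

Definition single (j : nat) (c : R) : nat -> R := fun n => if Nat.eq_dec n j then c else 0.

Lemma is_series_single j c : is_series (single j c) c.
Proof.
  assert (H : is_lim_seq (sum_n (single j c)) c); [|exact H].
  apply is_lim_seq_ext_loc with (fun _ => c); [|apply is_lim_seq_const].
  exists j; intros N HN; rewrite sum_n_Reals.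
  induction N as [|N IH]; simpl; unfold single.
  - destruct (Nat.eq_dec 0 j); [reflexivity|lia].
  - destruct (Nat.eq_dec (S N) j) as [<-|Hne].
    + rewrite (sum_eq _ (fun _ => 0)), sum_cte; [ring|].
      intros i Hi; destruct (Nat.eq_dec i (S N)); [lia|reflexivity].
    + rewrite Rplus_0_r; apply IH; lia.
Qed.

Lemma ex_series_single j c : ex_series (single j c).
Proof. exists c; apply is_series_single. Qed.

Lemma Series_single j c : Series (single j c) = c.
Proof. apply is_series_unique, is_series_single. Qed.

Lemma Cmod_sqr_add_le (x y : C) : Cmod (x + y) ^ 2 <= 2 * Cmod x ^ 2 + 2 * Cmod y ^ 2.
Proof.
  assert (Cmod (x + y) ^ 2 <= (Cmod x + Cmod y) ^ 2)
    by (apply pow_incr; split; [apply Cmod_ge_0|apply Cmod_triangle]).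
  assert (0 <= (Cmod x - Cmod y) ^ 2) by apply pow2_ge_0.
  nra.
Qed.

Lemma in_l2_add x y : in_l2 x -> in_l2 y -> in_l2 (addS x y).
Proof.
  intros Hx Hy; apply ex_series_le_nonneg with (fun n => 2 * Cmod (x n) ^ 2 + 2 * Cmod (y n) ^ 2).
  - intro n; split; [apply pow2_ge_0|apply Cmod_sqr_add_le].
  - apply ex_series_lincomb; assumption.
Qed.

Lemma in_l2_scale a x : in_l2 x -> in_l2 (scaleS a x).
Proof.
  intro Hx; apply (ex_series_ext_R (fun n => Cmod a ^ 2 * Cmod (x n) ^ 2)).
  - intro n; unfold scaleS; rewrite Cmod_mult; ring.
  - apply ex_series_scal_R, Hx.
Qed.

Lemma in_l2_sub x y : in_l2 x -> in_l2 y -> in_l2 (subS x y).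
Proof.
  intros Hx Hy; replace (subS x y) with (addS x (scaleS (-1)%C y)).
  - apply in_l2_add, in_l2_scale; assumption.
  - seq_ext; unfold subS, addS, scaleS; ring.
Qed.

Lemma l2norm_ge0 x : 0 <= l2norm x.
Proof. apply sqrt_pos. Qed.

Lemma l2norm_sqr x : in_l2 x -> l2norm x ^ 2 = Series (fun n => Cmod (x n) ^ 2).
Proof.
  intro Hx; apply pow2_sqrt, Series_ge0; [intro; apply pow2_ge_0|exact Hx].
Qed.

Lemma Cmod_le_l2norm x i : in_l2 x -> Cmod (x i) <= l2norm x.
Proof.
  intro Hx.
  assert (Cmod (x i) ^ 2 <= l2norm x ^ 2).
  { rewrite l2norm_sqr, <- (Series_single i (Cmod (x i) ^ 2)) by exact Hx.
    apply Series_le; [|exact Hx]; intro n; unfold single.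
    destruct (Nat.eq_dec n i) as [->|]; split; try lra; apply pow2_ge_0. }
  assert (0 <= Cmod (x i)) by apply Cmod_ge_0; assert (0 <= l2norm x) by apply l2norm_ge0.
  nra.
Qed.

Definition basis (j : nat) : seqC := fun i => if Nat.eq_dec i j then 1%C else 0%C.

Lemma Cmod_scale_basis_sqr c j :
  (fun n => Cmod (scaleS c (basis j) n) ^ 2) = single j (Cmod c ^ 2).
Proof.
  seq_ext; unfold scaleS, basis, single.
  destruct Nat.eq_dec; [rewrite Cmult_1_r|rewrite Cmult_0_r, Cmod_0]; ring.
Qed.

Lemma in_l2_scale_basis c j : in_l2 (scaleS c (basis j)).
Proof. unfold in_l2; rewrite Cmod_scale_basis_sqr; apply ex_series_single. Qed.

Lemma l2norm_scale_basis c j : l2norm (scaleS c (basis j)) = Cmod c.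
Proof.
  unfold l2norm; rewrite Cmod_scale_basis_sqr, Series_single.
  apply sqrt_pow2, Cmod_ge_0.
Qed.

Lemma scale1_basis j : scaleS 1%C (basis j) = basis j.
Proof. seq_ext; unfold scaleS; ring. Qed.

Lemma in_l2_basis j : in_l2 (basis j).
Proof. rewrite <- scale1_basis; apply in_l2_scale_basis. Qed.

Lemma l2norm_basis j : l2norm (basis j) = 1.
Proof. rewrite <- scale1_basis, l2norm_scale_basis; apply Cmod_1. Qed.

Lemma in_l2_zero : in_l2 zeroS.
Proof.
  replace zeroS with (scaleS 0%C (basis 0)); [apply in_l2_scale_basis|].
  seq_ext; unfold scaleS, zeroS; ring.
Qed.

Lemma op_linear_zero T : op_linear T -> T zeroS = zeroS.
Proof.
  intro HT; assert (E := HT zeroS zeroS (-1)%C in_l2_zero in_l2_zero).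
  replace (addS zeroS (scaleS (-1)%C zeroS)) with zeroS in E
    by (seq_ext; unfold addS, scaleS, zeroS; ring).
  seq_ext n; apply (f_equal (fun f => f n)) in E; unfold addS, scaleS in E.
  unfold zeroS; rewrite E at 1; ring.
Qed.

Lemma op_linear_scale T c x : op_linear T -> in_l2 x -> T (scaleS c x) = scaleS c (T x).
Proof.
  intros HT Hx; assert (E := HT zeroS x c in_l2_zero Hx).
  rewrite op_linear_zero in E by exact HT.
  replace (addS zeroS (scaleS c x)) with (scaleS c x) in E
    by (seq_ext; unfold addS, scaleS, zeroS; ring).
  rewrite E; seq_ext; unfold addS, zeroS; ring.
Qed.

Lemma RtoC_mult_eq0 r z : r <> 0 -> (RtoC r * z)%C = 0%C -> z = 0%C.
Proof.
  intros Hr Hz; replace z with (RtoC (/ r) * (RtoC r * z))%C.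
  - rewrite Hz; ring.
  - rewrite Cmult_assoc, <- RtoC_mult, Rinv_l by exact Hr; ring.
Qed.

Lemma ex_series_inner_re x y : in_l2 x -> in_l2 y ->
  ex_series (fun n => Re (x n * Cconj (y n))%C).
Proof.
  intros Hx Hy.
  apply (@ex_series_le R_AbsRing R_CompleteNormedModule _
           (fun n => / 2 * Cmod (x n) ^ 2 + / 2 * Cmod (y n) ^ 2)).
  - intro n; change (Rabs (Re (x n * Cconj (y n))%C)
                      <= / 2 * Cmod (x n) ^ 2 + / 2 * Cmod (y n) ^ 2).
    eapply Rle_trans; [apply re_le_Cmod|]; rewrite Cmod_mult, Cmod_conj.
    assert (0 <= (Cmod (x n) - Cmod (y n)) ^ 2) by apply pow2_ge_0; nra.
  - apply ex_series_lincomb; assumption.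
Qed.

Lemma inner_scale_basis_l c k y : inner (scaleS c (basis k)) y = (c * Cconj (y k))%C.
Proof.
  unfold inner.
  rewrite (Series_ext _ (single k (Re (c * Cconj (y k))))),
          (Series_ext (fun n => Im _) (single k (Im (c * Cconj (y k))))), !Series_single.
  - destruct (c * Cconj (y k))%C; reflexivity.
  - intro n; unfold single, scaleS, basis; destruct Nat.eq_dec as [->|];
      [rewrite Cmult_1_r|rewrite Cmult_0_r, Cmult_0_l]; reflexivity.
  - intro n; unfold single, scaleS, basis; destruct Nat.eq_dec as [->|];
      [rewrite Cmult_1_r|rewrite Cmult_0_r, Cmult_0_l]; reflexivity.
Qed.

Lemma inner_basis_r x k : inner x (basis k) = x k.
Proof.
  rewrite <- (scale1_basis k).
  unfold inner.
  rewrite (Series_ext _ (single k (Re (x k)))),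
          (Series_ext (fun n => Im _) (single k (Im (x k)))), !Series_single.
  - destruct (x k); reflexivity.
  - intro n; unfold single, scaleS, basis; destruct Nat.eq_dec as [->|];
      unfold Cconj, Im, Cmult; simpl; ring.
  - intro n; unfold single, scaleS, basis; destruct Nat.eq_dec as [->|];
      unfold Cconj, Re, Cmult; simpl; ring.
Qed.

Definition diag_op (d : nat -> R) : op := fun x n => (RtoC (d n) * x n)%C.
Definition shift : op := fun x n => match n with O => 0%C | S m => x m end.
Definition backshift : op := fun x n => x (S n).

Lemma Cmod_RtoC_mult_sqr r z : Cmod (RtoC r * z) ^ 2 = r ^ 2 * Cmod z ^ 2.
Proof. rewrite Cmod_mult, Rpow_mult_distr, Cmod_R, pow2_abs; reflexivity. Qed.

Lemma Series_diag_op_le d K x : (forall n, Rabs (d n) <= K) -> in_l2 x ->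
  in_l2 (diag_op d x) /\
  Series (fun n => Cmod (diag_op d x n) ^ 2) <= K ^ 2 * Series (fun n => Cmod (x n) ^ 2).
Proof.
  intros Hd Hx.
  assert (Hle : forall n, 0 <= Cmod (diag_op d x n) ^ 2 <= K ^ 2 * Cmod (x n) ^ 2).
  { intro n; unfold diag_op; rewrite Cmod_RtoC_mult_sqr; split; [nra|].
    apply Rmult_le_compat_r; [apply pow2_ge_0|].
    rewrite <- pow2_abs; apply pow_incr; split; [apply Rabs_pos|apply Hd]. }
  assert (Hex : ex_series (fun n => K ^ 2 * Cmod (x n) ^ 2))
    by (apply ex_series_scal_R, Hx).
  split; [exact (ex_series_le_nonneg _ _ Hle Hex)|].
  rewrite <- Series_scal_l; apply Series_le; assumption.
Qed.

Lemma diag_op_norm_le d K x : 0 <= K -> (forall n, Rabs (d n) <= K) -> in_l2 x ->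
  l2norm (diag_op d x) <= K * l2norm x.
Proof.
  intros HK Hd Hx; destruct (Series_diag_op_le d K x Hd Hx) as [_ Hle].
  unfold l2norm; rewrite <- (sqrt_pow2 K HK), <- sqrt_mult_alt by nra.
  apply sqrt_le_1_alt, Hle.
Qed.

Lemma bounded_diag_op d K : (forall n, Rabs (d n) <= K) -> bounded_op (diag_op d).
Proof.
  intro Hd; assert (HK : 0 <= K) by (eapply Rle_trans; [apply Rabs_pos|apply (Hd O)]).
  split; [|split].
  - intros x y c _ _; seq_ext; unfold diag_op, addS, scaleS; ring.
  - intros x Hx; apply (Series_diag_op_le d K x Hd Hx).
  - exists K; intros x Hx; apply diag_op_norm_le; assumption.
Qed.

Lemma diag_op_basis d j : diag_op d (basis j) = scaleS (RtoC (d j)) (basis j).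
Proof. seq_ext; unfold diag_op, scaleS, basis; destruct Nat.eq_dec as [->|]; ring. Qed.

Lemma diag_op_sub d1 d2 x :
  subS (diag_op d1 x) (diag_op d2 x) = diag_op (fun n => d1 n - d2 n) x.
Proof. seq_ext; unfold subS, diag_op; rewrite RtoC_minus; ring. Qed.

Lemma op_poly_diag_op cs d x : op_poly cs (diag_op d) x = diag_op (fun n => peval cs (d n)) x.
Proof.
  induction cs as [|c cs IH]; simpl; [|rewrite IH]; seq_ext;
    unfold zeroS, addS, scaleS, diag_op; [|rewrite RtoC_plus, RtoC_mult]; ring.
Qed.

Lemma Series_shift x : Series (fun n => Cmod (shift x n) ^ 2) = Series (fun n => Cmod (x n) ^ 2).
Proof. rewrite Series_incr_1_aux; [reflexivity|simpl; rewrite Cmod_0; ring]. Qed.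

Lemma l2norm_shift x : l2norm (shift x) = l2norm x.
Proof. unfold l2norm; rewrite Series_shift; reflexivity. Qed.

Lemma bounded_shift : bounded_op shift.
Proof.
  split; [|split].
  - intros x y c _ _; seq_ext [|n]; unfold shift, addS, scaleS; [ring|reflexivity].
  - intros x Hx; apply (ex_series_incr_1 (fun n => Cmod (shift x n) ^ 2)), Hx.
  - exists 1; intros x _; rewrite l2norm_shift; lra.
Qed.

Lemma bounded_backshift : bounded_op backshift.
Proof.
  split; [|split].
  - intros x y c _ _; reflexivity.
  - intros x Hx; apply (ex_series_incr_1 (fun n => Cmod (x n) ^ 2)), Hx.
  - exists 1; intros x Hx; rewrite Rmult_1_l; unfold l2norm; apply sqrt_le_1_alt.
    rewrite (Series_incr_1 (fun n => Cmod (x n) ^ 2)) by exact Hx.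
    assert (0 <= Cmod (x O) ^ 2) by apply pow2_ge_0; unfold backshift; lra.
Qed.

Lemma bounded_op_comp A B : bounded_op A -> bounded_op B -> bounded_op (fun x => A (B x)).
Proof.
  intros [LA [IA [MA HA]]] [LB [IB [MB HB]]]; split; [|split].
  - intros x y c Hx Hy; rewrite LB, LA by auto; reflexivity.
  - auto.
  - exists (Rabs MA * Rabs MB); intros x Hx.
    assert (Hbound : forall M y, in_l2 y -> M * l2norm y <= Rabs M * l2norm y)
      by (intros; apply Rmult_le_compat_r; [apply l2norm_ge0|apply RRle_abs]).
    eapply Rle_trans; [apply HA, IB, Hx|]; eapply Rle_trans; [apply Hbound, IB, Hx|].
    rewrite Rmult_assoc; apply Rmult_le_compat_l; [apply Rabs_pos|].
    eapply Rle_trans; [apply HB, Hx|apply Hbound, Hx].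
Qed.

Lemma Cmod_eq0_of_le_eps z : (forall eps, 0 < eps -> Cmod z <= eps) -> z = 0%C.
Proof.
  intro Hz; apply Cmod_eq_0, Rle_antisym; [|apply Cmod_ge_0].
  apply Rnot_lt_le; intro Hlt; specialize (Hz (Cmod z / 2) ltac:(lra)); lra.
Qed.

Section Eigenvector.

Variables (S : op) (j : nat) (s : R).
Hypothesis S_bounded : bounded_op S.
Hypothesis S_basis : S (basis j) = scaleS (RtoC s) (basis j).

Lemma op_poly_eigen cs : op_poly cs S (basis j) = scaleS (RtoC (peval cs s)) (basis j).
Proof.
  destruct S_bounded as [HSl _].
  induction cs as [|c cs IH]; simpl; seq_ext; unfold zeroS, addS, scaleS.
  - ring.
  - rewrite IH, op_linear_scale, S_basis by (auto; apply in_l2_basis).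
    unfold scaleS; rewrite RtoC_plus, RtoC_mult; ring.
Qed.

(* [is_frac_pow] only constrains [F] through polynomial sequences converging
   uniformly to [t^p]; [rpow_poly_approx] provides one. *)
Lemma frac_pow_eigen F p : 0 < p <= 1 -> 0 < s -> is_frac_pow S p F ->
  F (basis j) = scaleS (RtoC (rpow s p)) (basis j).
Proof.
  intros Hp Hs [[_ [HF_l2 _]] HF].
  destruct S_bounded as [_ [_ [M0 HM0]]].
  set (M := Rabs M0 + 1).
  assert (HM : 0 < M) by (assert (0 <= Rabs M0) by apply Rabs_pos; unfold M; lra).
  assert (HSM : forall x, in_l2 x -> l2norm (S x) <= M * l2norm x).
  { intros x Hx; eapply Rle_trans; [apply HM0, Hx|].
    apply Rmult_le_compat_r; [apply l2norm_ge0|unfold M; assert (H := RRle_abs M0); lra]. }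
  assert (HsM : s <= M).
  { specialize (HSM (basis j) (in_l2_basis j)).
    rewrite S_basis, l2norm_scale_basis, l2norm_basis, Cmod_R, Rabs_pos_eq in HSM; lra. }
  destruct (rpow_poly_approx p M Hp HM) as [ps Hps].
  assert (Hlim := HF M (Rlt_le _ _ HM) HSM ps Hps (basis j) (in_l2_basis j)).
  apply is_lim_seq_spec in Hlim.
  assert (HFj : in_l2 (F (basis j))) by apply HF_l2, in_l2_basis.
  seq_ext i; set (r := scaleS (RtoC (rpow s p)) (basis j) i).
  enough (Hdiff : (r - F (basis j) i)%C = 0%C)
    by (replace (F (basis j) i) with (r - (r - F (basis j) i))%C by ring;
        rewrite Hdiff; ring).
  apply Cmod_eq0_of_le_eps; intros eps Heps.
  destruct (Hps (eps / 2)) as [N1 HN1]; [lra|].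
  destruct (Hlim (mkposreal (eps / 2) ltac:(lra))) as [N2 HN2].
  set (n := max N1 N2).
  specialize (HN1 n ltac:(lia) s ltac:(lra)); specialize (HN2 n ltac:(lia)); simpl in HN2.
  rewrite Rminus_0_r, Rabs_pos_eq, op_poly_eigen in HN2 by apply l2norm_ge0.
  set (q := peval (ps n) s) in *.
  assert (Hcoord := Cmod_le_l2norm _ i (in_l2_sub _ _ (in_l2_scale_basis (RtoC q) j) HFj)).
  replace (r - F (basis j) i)%C
    with (RtoC (rpow s p - q) * basis j i + subS (scaleS (RtoC q) (basis j)) (F (basis j)) i)%C
    by (unfold r, subS, scaleS; rewrite RtoC_minus; ring).
  eapply Rle_trans; [apply Cmod_triangle|]; rewrite Cmod_mult, Cmod_R, Rabs_minus_sym.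
  assert (Cmod (basis j i) <= 1)
    by (unfold basis; destruct Nat.eq_dec; [rewrite Cmod_1|rewrite Cmod_0]; lra).
  assert (0 <= Rabs (q - rpow s p)) by apply Rabs_pos.
  nra.
Qed.

End Eigenvector.

Section WeightedShift.

Variables (a : nat -> R) (K : R).
Hypothesis a_pos : forall n, 0 < a n.
Hypothesis a_le : forall n, a n <= K.
Hypothesis a_inj : forall n m, a n = a m -> n = m.

Definition wshift : op := fun x => shift (diag_op a x).

Lemma Rabs_a_le n : Rabs (a n) <= K.
Proof. rewrite Rabs_pos_eq by (left; apply a_pos); apply a_le. Qed.

Lemma bounded_wshift : bounded_op wshift.
Proof.
  apply (bounded_op_comp shift); [apply bounded_shift|apply (bounded_diag_op a K Rabs_a_le)].
Qed.

Lemma Series_wshift x :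
  Series (fun n => Cmod (wshift x n) ^ 2) = Series (fun n => a n ^ 2 * Cmod (x n) ^ 2).
Proof. unfold wshift; rewrite Series_shift; apply Series_ext; intro; apply Cmod_RtoC_mult_sqr. Qed.

Lemma wshift_basis j : wshift (basis j) = scaleS (RtoC (a j)) (basis (S j)).
Proof.
  seq_ext [|n]; unfold wshift, shift, diag_op, scaleS, basis.
  - destruct (Nat.eq_dec 0 (S j)); [lia|ring].
  - destruct (Nat.eq_dec n j), (Nat.eq_dec (S n) (S j)); subst; try lia; ring.
Qed.

Lemma is_adjoint_wshift : is_adjoint wshift (fun y => diag_op a (backshift y)).
Proof.
  split; [apply bounded_op_comp; [apply (bounded_diag_op a K Rabs_a_le)|apply bounded_backshift]|].
  intros x y Hx Hy; unfold inner; f_equal;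
    (rewrite Series_incr_1_aux by (unfold wshift, shift; rewrite Cmult_0_l; reflexivity);
     apply Series_ext; intro n; unfold wshift, shift, diag_op, backshift;
     destruct (x n), (y (S n)); unfold Re, Im, Cconj, Cmult, RtoC; simpl; ring).
Qed.

(* Testing the adjoint identity against [e_n] determines every adjoint. *)
Lemma adjoint_wshift_eq Ts : is_adjoint wshift Ts -> forall y, in_l2 y ->
  forall n, Ts y n = (RtoC (a n) * y (S n))%C.
Proof.
  intros [_ Hadj] y Hy n.
  specialize (Hadj (basis n) y (in_l2_basis n) Hy).
  rewrite wshift_basis, inner_scale_basis_l, <- (scale1_basis n), inner_scale_basis_l in Hadj.
  destruct (Ts y n), (y (S n)); unfold Cmult, Cconj, RtoC in *; simpl in *.
  injection Hadj as E1 E2; f_equal; nra.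
Qed.

Lemma positive_diag_op : positive_op (diag_op a).
Proof.
  intros x Hx; unfold inner; simpl; split.
  - rewrite (Series_ext _ (fun _ => 0)), Series_zero; [reflexivity|].
    intro n; unfold diag_op; destruct (x n); unfold Im, Cconj, Cmult, RtoC; simpl; ring.
  - apply Series_ge0.
    + intro n; unfold diag_op; destruct (x n) as [u v]; unfold Re, Cconj, Cmult, RtoC; simpl.
      assert (H := a_pos n); nra.
    + exact (ex_series_inner_re _ _ (proj1 (proj2 (bounded_diag_op a K Rabs_a_le)) x Hx) Hx).
Qed.

Lemma is_modulus_wshift : is_modulus wshift (diag_op a).
Proof.
  split; [apply (bounded_diag_op a K Rabs_a_le)|split; [apply positive_diag_op|]].
  exists (fun y => diag_op a (backshift y)); split; [apply is_adjoint_wshift|reflexivity].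
Qed.

Lemma is_polar_isometry_wshift : is_polar_isometry wshift (diag_op a) shift.
Proof.
  split; [split; [apply bounded_shift|intros; apply l2norm_shift]|split; [|reflexivity]].
  intros x Hx; split; intro H; seq_ext [|n]; try reflexivity;
    apply (f_equal (fun f => f (S n))) in H; unfold wshift, shift, diag_op, zeroS in *.
  - rewrite H; ring.
  - apply RtoC_mult_eq0 with (a n); [apply Rgt_not_eq, a_pos|exact H].
Qed.

Lemma rpow_a_le p n : 0 <= p <= 1 -> Rabs (rpow (a n) p) <= Rmax 1 K.
Proof.
  intro Hp; rewrite Rabs_pos_eq by apply rpow_ge0; rewrite rpow_pos_eq by apply a_pos.
  destruct (Rle_or_lt 1 (a n)) as [H1|H1].
  - apply Rle_trans with (a n); [|apply Rle_trans with K; [apply a_le|apply Rmax_r]].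
    rewrite <- (Rpower_1 (a n)) at 2 by apply a_pos; apply Rle_Rpower; lra.
  - apply Rle_trans with 1; [|apply Rmax_l].
    replace 1 with (Rpower 1 p) by (unfold Rpower; rewrite ln_1, Rmult_0_r; apply exp_0).
    apply Rle_Rpower_l; [lra|]; split; [apply a_pos|lra].
Qed.

Lemma is_frac_pow_diag_op p : 0 <= p <= 1 ->
  is_frac_pow (diag_op a) p (diag_op (fun n => rpow (a n) p)).
Proof.
  intro Hp; split; [apply (bounded_diag_op _ _ (fun n => rpow_a_le p n Hp))|].
  intros M HM0 HM ps Hps x Hx.
  assert (HaM : forall n, a n <= M).
  { intro n; specialize (HM (basis n) (in_l2_basis n)).
    rewrite diag_op_basis, l2norm_scale_basis, l2norm_basis, Cmod_R, Rabs_pos_eq in HM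
      by (left; apply a_pos); lra. }
  apply is_lim_seq_spec; intros [eps Heps]; simpl.
  assert (Hx0 := l2norm_ge0 x).
  set (e := eps / (2 * (l2norm x + 1))).
  assert (He : 0 < e) by (unfold e; apply Rdiv_lt_0_compat; lra).
  destruct (Hps e He) as [N HN]; exists N; intros n Hn.
  rewrite Rminus_0_r, Rabs_pos_eq, op_poly_diag_op, diag_op_sub by apply l2norm_ge0.
  eapply Rle_lt_trans.
  - apply (diag_op_norm_le _ e); [lra| |exact Hx].
    intro k; apply HN; [exact Hn|split; [left; apply a_pos|apply HaM]].
  - assert (e * (2 * (l2norm x + 1)) = eps) by (unfold e; field; lra); nra.
Qed.

Lemma two_isometry_wshift :
  (forall n, 1 - 2 * a n ^ 2 + a n ^ 2 * a (S n) ^ 2 = 0) -> m_isometry 2 wshift.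
Proof.
  intro Ha; split; [exact bounded_wshift|intros x Hx].
  assert (Hx1 := proj1 (proj2 bounded_wshift) x Hx).
  assert (Hx2 := proj1 (proj2 bounded_wshift) _ Hx1).
  assert (Hsq : forall n, a n ^ 2 <= K ^ 2)
    by (intro n; rewrite <- pow2_abs; apply pow_incr; split; [apply Rabs_pos|apply Rabs_a_le]).
  assert (Hex1 : ex_series (fun n => a n ^ 2 * Cmod (x n) ^ 2)).
  { apply (ex_series_ext_R (fun n => Cmod (diag_op a x n) ^ 2)); [intro; apply Cmod_RtoC_mult_sqr|].
    apply (Series_diag_op_le a K x Rabs_a_le Hx). }
  assert (Hex2 : ex_series (fun n => a (S n) ^ 2 * (a n ^ 2 * Cmod (x n) ^ 2))).
  { apply ex_series_le_nonneg with (fun n => K ^ 2 * (a n ^ 2 * Cmod (x n) ^ 2));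
      [|apply ex_series_scal_R, Hex1].
    intro n; assert (0 <= a n ^ 2 * Cmod (x n) ^ 2) by (apply Rmult_le_pos; apply pow2_ge_0).
    split; [apply Rmult_le_pos; [apply pow2_ge_0|assumption]|].
    apply Rmult_le_compat_r; [assumption|apply Hsq]. }
  assert (E1 := Series_wshift x); assert (E2 := Series_wshift (wshift x)).
  rewrite (Series_incr_1_aux (fun n => a n ^ 2 * Cmod (wshift x n) ^ 2)) in E2
    by (simpl; rewrite Cmod_0; ring).
  rewrite (Series_ext (fun n => a (S n) ^ 2 * Cmod (wshift x (S n)) ^ 2)
                      (fun n => a (S n) ^ 2 * (a n ^ 2 * Cmod (x n) ^ 2))) in E2
    by (intro n; change (wshift x (S n)) with (RtoC (a n) * x n)%C;
        rewrite Cmod_RtoC_mult_sqr; reflexivity).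
  transitivity (l2norm x ^ 2 - 2 * l2norm (wshift x) ^ 2 + l2norm (wshift (wshift x)) ^ 2).
  { simpl; rewrite C_n_0, C_n_n; unfold Binomial.C; simpl; field. }
  rewrite !l2norm_sqr, E1, E2 by assumption.
  transitivity (Series (fun n => 1 * (1 * Cmod (x n) ^ 2 + -2 * (a n ^ 2 * Cmod (x n) ^ 2))
                                 + 1 * (a (S n) ^ 2 * (a n ^ 2 * Cmod (x n) ^ 2)))).
  - rewrite !Series_lincomb; try apply ex_series_lincomb; try assumption; ring.
  - rewrite <- Series_zero; apply Series_ext; intro n.
    transitivity ((1 - 2 * a n ^ 2 + a n ^ 2 * a (S n) ^ 2) * Cmod (x n) ^ 2); [ring|].
    rewrite Ha; ring.
Qed.

Definition aluthge_wshift (lam : R) : op :=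
  fun x => diag_op (fun n => rpow (a n) lam) (shift (diag_op (fun n => rpow (a n) (1 - lam)) x)).

Lemma is_aluthge_wshift lam : 0 <= lam <= 1 -> is_aluthge lam wshift (aluthge_wshift lam).
Proof.
  intro Hlam; exists (diag_op a), shift, (diag_op (fun n => rpow (a n) lam)),
    (diag_op (fun n => rpow (a n) (1 - lam))).
  split; [apply is_modulus_wshift|split; [apply is_polar_isometry_wshift|]].
  split; [|split; [|reflexivity]]; apply is_frac_pow_diag_op; lra.
Qed.

Section Uniqueness.

Variables (Tabs V : op).
Hypothesis Tabs_modulus : is_modulus wshift Tabs.

Lemma modulus_wshift_sqr y : in_l2 y -> Tabs (Tabs y) = diag_op (fun n => a n ^ 2) y.
Proof.
  intro Hy; destruct Tabs_modulus as [_ [_ [Ts [HTs HSS]]]].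
  rewrite HSS by exact Hy; seq_ext.
  rewrite (adjoint_wshift_eq Ts HTs _ (proj1 (proj2 bounded_wshift) y Hy)).
  unfold wshift, shift, diag_op; rewrite RtoC_pow; simpl; ring.
Qed.

(* [Tabs e_j] is an eigenvector of [Tabs^2 = diag (a^2)] for [a_j^2]; the
   weights being distinct, that eigenspace is the line through [e_j]. *)
Lemma modulus_wshift_basis_line j :
  Tabs (basis j) = scaleS (Tabs (basis j) j) (basis j).
Proof.
  destruct Tabs_modulus as [[HSl [HS_l2 _]] _].
  set (w := Tabs (basis j)).
  assert (HSw : Tabs w = scaleS (RtoC (a j ^ 2)) (basis j)).
  { unfold w; rewrite modulus_wshift_sqr by apply in_l2_basis.
    exact (diag_op_basis (fun n => a n ^ 2) j). }
  assert (E : Tabs (Tabs w) = scaleS (RtoC (a j ^ 2)) w)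
    by (rewrite HSw, op_linear_scale by (auto; apply in_l2_basis); reflexivity).
  rewrite modulus_wshift_sqr in E by (apply HS_l2, in_l2_basis).
  seq_ext n; unfold scaleS, basis; destruct Nat.eq_dec as [->|Hn]; [ring|].
  rewrite Cmult_0_r; apply RtoC_mult_eq0 with (a n ^ 2 - a j ^ 2).
  - intro Hsq; apply Hn, a_inj; assert (H1 := a_pos n); assert (H2 := a_pos j); nra.
  - apply (f_equal (fun f => f n)) in E; unfold diag_op, scaleS in E.
    rewrite RtoC_minus; unfold Cminus; rewrite Cmult_plus_distr_r, E; ring.
Qed.

(* On that line [Tabs] acts by a square root of [a_j^2]; positivity picks [a_j]. *)
Lemma modulus_wshift_basis j : Tabs (basis j) = scaleS (RtoC (a j)) (basis j).
Proof.
  destruct Tabs_modulus as [[HSl _] [HSpos _]].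
  assert (Hline := modulus_wshift_basis_line j).
  set (c := Tabs (basis j) j) in Hline.
  assert (Hsq : (c * c)%C = RtoC (a j ^ 2)).
  { assert (E := modulus_wshift_sqr _ (in_l2_basis j)).
    rewrite Hline, op_linear_scale, Hline, diag_op_basis in E by (auto; apply in_l2_basis).
    apply (f_equal (fun f => f j)) in E; unfold scaleS, basis in E.
    destruct Nat.eq_dec; [|lia]; rewrite Cmult_assoc, !Cmult_1_r in E; exact E. }
  assert (Hpos := HSpos _ (in_l2_basis j)); rewrite inner_basis_r in Hpos; fold c in Hpos.
  rewrite Hline; f_equal; clearbody c.
  destruct c as [r t]; unfold Im, Re in Hpos; simpl in Hpos; destruct Hpos as [-> Hr].
  unfold Cmult, RtoC in Hsq; simpl in Hsq; injection Hsq as Hsq _.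
  assert (Ha := a_pos j); unfold RtoC; f_equal; nra.
Qed.

Lemma polar_wshift_basis j : is_polar_isometry wshift Tabs V -> V (basis j) = basis (S j).
Proof.
  intros [[[HVl _] _] [_ HTV]].
  assert (E := HTV (basis j) (in_l2_basis j)).
  rewrite wshift_basis, modulus_wshift_basis, op_linear_scale in E by (auto; apply in_l2_basis).
  seq_ext n; apply (f_equal (fun f => f n)) in E; unfold scaleS in E.
  assert (Hz : (RtoC (a j) * (V (basis j) n - basis (S j) n))%C = 0%C)
    by (unfold Cminus; rewrite Cmult_plus_distr_l, <- E; ring).
  apply RtoC_mult_eq0 in Hz; [|apply Rgt_not_eq, a_pos].
  replace (V (basis j) n) with ((V (basis j) n - basis (S j) n) + basis (S j) n)%C by ring.
  rewrite Hz; ring.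
Qed.

End Uniqueness.

Definition aluthge_weight (lam : R) (n : nat) : R := rpow (a n) (1 - lam) * rpow (a (S n)) lam.

Lemma aluthge_wshift_basis lam D j : 0 < lam < 1 -> is_aluthge lam wshift D ->
  D (basis j) = scaleS (RtoC (aluthge_weight lam j)) (basis (S j)).
Proof.
  intros Hlam [Tabs [V [P [Q [HS [HV [HP [HQ HD]]]]]]]].
  assert (HSb : bounded_op Tabs) by apply HS.
  assert (Heig : forall k, Tabs (basis k) = scaleS (RtoC (a k)) (basis k))
    by (intro; apply modulus_wshift_basis, HS).
  assert (HQj := frac_pow_eigen Tabs j (a j) HSb (Heig j) Q (1 - lam) ltac:(lra) (a_pos j) HQ).
  assert (HPj := frac_pow_eigen Tabs (S j) (a (S j)) HSb (Heig (S j)) P lam ltac:(lra)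
                   (a_pos (S j)) HP).
  assert (HVl : op_linear V) by exact (proj1 (proj1 (proj1 HV))).
  assert (HPl : op_linear P) by exact (proj1 (proj1 HP)).
  rewrite HD, HQj, op_linear_scale, (polar_wshift_basis Tabs V HS j HV), op_linear_scale, HPj
    by (auto; apply in_l2_basis).
  seq_ext; unfold scaleS, aluthge_weight; rewrite RtoC_mult; ring.
Qed.

End WeightedShift.

Definition fdiff (m : nat) (f : nat -> R) (j : nat) : R :=
  sum_f_R0 (fun k => (-1) ^ k * Binomial.C m k * f (j + k)%nat) m.

Lemma binomial_sum_succ (t : nat -> R) m :
  sum_f_R0 (fun k => Binomial.C (S m) k * t k) (S m)
  = sum_f_R0 (fun k => Binomial.C m k * t k) m
    + sum_f_R0 (fun k => Binomial.C m k * t (S k)) m.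
Proof.
  destruct m as [|m].
  - simpl; rewrite !C_n_0, C_n_n; ring.
  - rewrite (decomp_sum _ (S (S m))) by lia; simpl pred.
    rewrite (tech5 (fun i => Binomial.C (S (S m)) (S i) * t (S i)) m).
    rewrite (sum_eq (fun i => Binomial.C (S (S m)) (S i) * t (S i))
               (fun i => 1 * (Binomial.C (S m) i * t (S i))
                         + 1 * (Binomial.C (S m) (S i) * t (S i))))
      by (intros i Hi; rewrite <- (pascal (S m) i ltac:(lia)); ring).
    rewrite sum_f_R0_lin, (decomp_sum (fun k => Binomial.C (S m) k * t k) (S m)) by lia.
    simpl pred; rewrite (tech5 (fun k => Binomial.C (S m) k * t (S k)) m).
    rewrite !C_n_0, !C_n_n; ring.
Qed.

Lemma fdiff_succ m f j : fdiff (S m) f j = fdiff m (fun n => f n - f (S n)) j.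
Proof.
  set (t k := (-1) ^ k * f (j + k)%nat); unfold fdiff.
  rewrite (sum_eq _ (fun k => Binomial.C (S m) k * t k)) by (intros; unfold t; ring).
  rewrite binomial_sum_succ, <- plus_sum.
  apply sum_eq; intros k _; unfold t; rewrite Nat.add_succ_r; simpl; ring.
Qed.

Lemma fdiff_zero_of_lim k : forall h, (forall j, fdiff k h j = 0) -> is_lim_seq h 0 ->
  forall n, h n = 0.
Proof.
  induction k as [|k IH]; intros h Hh Hlim n.
  - specialize (Hh n); unfold fdiff in Hh; simpl in Hh.
    rewrite C_n_0, Nat.add_0_r in Hh; lra.
  - assert (Hstep : forall n, h n - h (S n) = 0).
    { apply IH; [intro j; rewrite <- fdiff_succ; apply Hh|].
      replace 0 with (0 - 0) by ring.
      apply is_lim_seq_minus'; [exact Hlim|apply (is_lim_seq_incr_1 h 0), Hlim]. }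
    assert (Hconst : forall i, h i = h O)
      by (induction i as [|i IHi]; [reflexivity|specialize (Hstep i); lra]).
    assert (Hc : is_lim_seq (fun _ => h O) 0) by (apply is_lim_seq_ext with h; auto).
    apply is_lim_seq_unique in Hc; rewrite Lim_seq_const in Hc.
    rewrite Hconst; injection Hc; auto.
Qed.

(* Strict concavity makes the second differences negative, while monotonicity
   makes them summable, hence convergent to 0: no higher difference can vanish
   identically. *)
Lemma fdiff_not_zero_of_concave g m :
  (forall n, g n - 2 * g (S n) + g (S (S n)) < 0) -> (forall n, g n <= g (S n)) ->
  (2 <= m)%nat -> ~ (forall j, fdiff m g j = 0).
Proof.
  intros Hconc Hmono Hm Hzero.
  destruct m as [|[|m]]; try lia.
  set (h n := g n - 2 * g (S n) + g (S (S n))).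
  assert (Hh : forall j, fdiff m h j = 0).
  { intro j; rewrite <- (Hzero j), !fdiff_succ; unfold fdiff.
    apply sum_eq; intros; unfold h; ring. }
  set (G n := g (S n) - g n).
  assert (HG : ex_finite_lim_seq G).
  { apply ex_finite_lim_seq_decr with 0; intro n; unfold G;
      [specialize (Hconc n)|specialize (Hmono n)]; lra. }
  destruct HG as [L HL].
  assert (Hlim : is_lim_seq h 0).
  { apply is_lim_seq_ext with (fun n => G (S n) - G n); [intro n; unfold G, h; ring|].
    replace 0 with (L - L) by ring.
    apply is_lim_seq_minus'; [apply (is_lim_seq_incr_1 G L)|]; exact HL. }
  specialize (fdiff_zero_of_lim m h Hh Hlim O); specialize (Hconc O); unfold h; lra.
Qed.

Definition wgeom (l x y : R) : R := Rpower x (1 - l) * Rpower y l.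

Lemma wgeom_pos l x y : 0 < wgeom l x y.
Proof. apply Rmult_lt_0_compat; apply Rpower_gt0. Qed.

Lemma wgeom_mult l x1 x2 y1 y2 : 0 < x1 -> 0 < x2 -> 0 < y1 -> 0 < y2 ->
  wgeom l (x1 * x2) (y1 * y2) = wgeom l x1 y1 * wgeom l x2 y2.
Proof. intros; unfold wgeom; rewrite <- !Rpower_mult_distr by assumption; ring. Qed.

(* Weighted AM-GM from [ln z <= z - 1] (strict for [z <> 1]), applied to
   [x / A] and [y / A] with [A] the weighted arithmetic mean. *)
Lemma wgeom_le_wmean l x y : 0 < l < 1 -> 0 < x -> 0 < y ->
  wgeom l x y <= (1 - l) * x + l * y /\
  (x <> y -> wgeom l x y < (1 - l) * x + l * y).
Proof.
  intros Hl Hx Hy; set (A := (1 - l) * x + l * y).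
  assert (HA : 0 < A) by (unfold A; nra).
  assert (Hln : forall z, 0 < z -> ln z - ln A <= z / A - 1 /\ (z <> A -> ln z - ln A < z / A - 1)).
  { intros z Hz.
    assert (Hq : 0 < z / A) by (apply Rdiv_lt_0_compat; assumption).
    assert (E : ln z - ln A = ln (z / A))
      by (unfold Rdiv; rewrite ln_mult, ln_Rinv by (auto; apply Rinv_0_lt_compat, HA); ring).
    rewrite E; split.
    - assert (H := exp_ineq1_le (ln (z / A))); rewrite exp_ln in H by exact Hq; lra.
    - intro Hne; assert (Hln0 : ln (z / A) <> 0).
      { intro E0; apply Hne; apply (f_equal exp) in E0; rewrite exp_ln, exp_0 in E0 by exact Hq.
        unfold Rdiv in E0; apply (Rmult_eq_compat_r A) in E0.
        rewrite Rmult_assoc, Rinv_l, Rmult_1_l, Rmult_1_r in E0 by lra; exact E0. }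
      assert (H := exp_ineq1 _ Hln0); rewrite exp_ln in H by exact Hq; lra. }
  assert (Hmean : (1 - l) * (x / A - 1) + l * (y / A - 1) = 0).
  { replace ((1 - l) * (x / A - 1) + l * (y / A - 1)) with (((1 - l) * x + l * y) / A - 1)
      by (field; lra).
    fold A; field; lra. }
  assert (EG : wgeom l x y = exp ((1 - l) * (ln x - ln A) + l * (ln y - ln A)) * A).
  { unfold wgeom, Rpower; rewrite <- (exp_ln A) at 3 by exact HA; rewrite <- !exp_plus.
    f_equal; ring. }
  destruct (Hln x Hx) as [Hx1 Hx2], (Hln y Hy) as [Hy1 _].
  assert (Hexp : forall u, u < 0 -> exp u < 1)
    by (intros u Hu; rewrite <- exp_0; apply exp_increasing, Hu).
  assert (Hexp0 := exp_pos ((1 - l) * (ln x - ln A) + l * (ln y - ln A))).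
  rewrite EG; split.
  - assert (exp ((1 - l) * (ln x - ln A) + l * (ln y - ln A)) <= 1); [|nra].
    destruct (Rle_lt_or_eq_dec ((1 - l) * (ln x - ln A) + l * (ln y - ln A)) 0) as [Hu|Hu];
      [nra|left; apply Hexp, Hu|rewrite Hu, exp_0; lra].
  - intro Hxy; assert (x <> A) by (intro E; apply Hxy; unfold A in E; nra).
    specialize (Hx2 H).
    assert (exp ((1 - l) * (ln x - ln A) + l * (ln y - ln A)) < 1) by (apply Hexp; nra).
    nra.
Qed.

(* Both outer values are [wgeom l (u+1) (u+2)] times a weighted geometric mean
   whose two arithmetic counterparts add up to [2]; the first pair of
   arguments is unequal, so AM-GM is strict there. *)
Lemma wgeom_concave l u : 0 < l < 1 -> 0 < u ->
  wgeom l u (u + 1) + wgeom l (u + 2) (u + 3) < 2 * wgeom l (u + 1) (u + 2).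
Proof.
  intros Hl Hu; set (A := u + 1); set (B := u + 2).
  assert (HA : 0 < A) by (unfold A; lra); assert (HB : 0 < B) by (unfold B; lra).
  assert (Hfac : forall x y, 0 < x -> 0 < y ->
            wgeom l (A * (x / A)) (B * (y / B)) = wgeom l A B * wgeom l (x / A) (y / B))
    by (intros x y Hx Hy; apply wgeom_mult; try apply Rdiv_lt_0_compat; assumption).
  replace (wgeom l u A) with (wgeom l A B * wgeom l (u / A) ((u + 1) / B))
    by (rewrite <- Hfac by lra; f_equal; unfold A, B; field; lra).
  replace (wgeom l B (u + 3)) with (wgeom l A B * wgeom l ((u + 2) / A) ((u + 3) / B))
    by (rewrite <- Hfac by lra; f_equal; unfold A, B; field; lra).
  assert (Hne : u / A <> (u + 1) / B).
  { intro E; assert (E2 : u / A * (A * B) = (u + 1) / B * (A * B)) by (rewrite E; reflexivity).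
    replace (u / A * (A * B)) with (u * B) in E2 by (field; lra).
    replace ((u + 1) / B * (A * B)) with ((u + 1) * A) in E2 by (field; lra).
    unfold A, B in E2; nra. }
  assert (H1 := proj2 (wgeom_le_wmean l (u / A) ((u + 1) / B) Hl
                  (Rdiv_lt_0_compat u A Hu HA) (Rdiv_lt_0_compat (u + 1) B ltac:(lra) HB)) Hne).
  assert (H2 := proj1 (wgeom_le_wmean l ((u + 2) / A) ((u + 3) / B) Hl
                  (Rdiv_lt_0_compat (u + 2) A ltac:(lra) HA)
                  (Rdiv_lt_0_compat (u + 3) B ltac:(lra) HB))).
  assert (Hsum : (1 - l) * (u / A) + l * ((u + 1) / B)
                 + ((1 - l) * ((u + 2) / A) + l * ((u + 3) / B)) = 2)
    by (unfold A, B; field; lra).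
  assert (HG := wgeom_pos l A B).
  apply (Rmult_lt_compat_l (wgeom l A B)) in H1; [|exact HG].
  apply (Rmult_le_compat_l (wgeom l A B)) in H2; [|lra].
  nra.
Qed.

(* The paper's weights [a_j = sqrt((j+1)/j)], [j >= 1], shifted to start at index 0. *)
Definition weight (n : nat) : R := sqrt ((INR n + 2) / (INR n + 1)).

Lemma weight_sqr n : weight n ^ 2 = (INR n + 2) / (INR n + 1).
Proof.
  assert (0 <= INR n) by apply pos_INR.
  apply pow2_sqrt, Rlt_le, Rdiv_lt_0_compat; lra.
Qed.

Lemma weight_pos n : 0 < weight n.
Proof.
  assert (0 <= INR n) by apply pos_INR.
  apply sqrt_lt_R0, Rdiv_lt_0_compat; lra.
Qed.

Lemma weight_le2 n : weight n <= 2.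
Proof.
  assert (H := weight_sqr n); assert (H0 := weight_pos n); assert (0 <= INR n) by apply pos_INR.
  assert (weight n ^ 2 <= 2); [|nra].
  rewrite H; apply Rmult_le_reg_r with (INR n + 1); [lra|].
  unfold Rdiv; rewrite Rmult_assoc, Rinv_l by lra; lra.
Qed.

Lemma weight_inj n m : weight n = weight m -> n = m.
Proof.
  intro E; apply (f_equal (fun r => r ^ 2)) in E; rewrite !weight_sqr in E.
  assert (0 <= INR n) by apply pos_INR; assert (0 <= INR m) by apply pos_INR.
  apply INR_eq; unfold Rdiv in E.
  apply (Rmult_eq_compat_r ((INR n + 1) * (INR m + 1))) in E.
  replace ((INR n + 2) * / (INR n + 1) * ((INR n + 1) * (INR m + 1)))
    with ((INR n + 2) * (INR m + 1)) in E by (field; lra).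
  replace ((INR m + 2) * / (INR m + 1) * ((INR n + 1) * (INR m + 1)))
    with ((INR m + 2) * (INR n + 1)) in E by (field; lra).
  lra.
Qed.

Fixpoint wprod (b : nat -> R) (j k : nat) : R :=
  match k with O => 1 | S k => wprod b j k * b (j + k)%nat end.

Lemma iter_weighted_basis D b : op_linear D ->
  (forall j, D (basis j) = scaleS (RtoC (b j)) (basis (S j))) ->
  forall j k, Nat.iter k D (basis j) = scaleS (RtoC (wprod b j k)) (basis (j + k)).
Proof.
  intros HD Hb j k; induction k as [|k IH]; simpl.
  - rewrite Nat.add_0_r; symmetry; apply scale1_basis.
  - rewrite IH, op_linear_scale, Hb, Nat.add_succ_r by (auto; apply in_l2_basis).
    seq_ext; unfold scaleS; rewrite RtoC_mult; ring.
Qed.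

Lemma m_isometry_weighted_basis m D b : m_isometry m D ->
  (forall j, D (basis j) = scaleS (RtoC (b j)) (basis (S j))) ->
  forall j, sum_f_R0 (fun k => (-1) ^ k * Binomial.C m k * wprod b j k ^ 2) m = 0.
Proof.
  intros [[HDl _] Hiso] Hb j; rewrite <- (Hiso (basis j) (in_l2_basis j)).
  apply sum_eq; intros k _.
  rewrite (iter_weighted_basis D b HDl Hb), l2norm_scale_basis, Cmod_R, pow2_abs; reflexivity.
Qed.

Definition gseq (lam : R) (n : nat) : R := wgeom lam (INR n + 1) (INR n + 2).

Lemma gseq_concave lam n : 0 < lam < 1 -> gseq lam n - 2 * gseq lam (S n) + gseq lam (S (S n)) < 0.
Proof.
  intro Hlam; unfold gseq; rewrite !S_INR.
  assert (Hn : 0 <= INR n) by apply pos_INR.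
  assert (H := wgeom_concave lam (INR n + 1) Hlam ltac:(lra)).
  replace (INR n + 1 + 1 + 1) with (INR n + 1 + 2) by ring.
  replace (INR n + 1 + 1 + 2) with (INR n + 1 + 3) by ring.
  replace (INR n + 2) with (INR n + 1 + 1) by ring.
  lra.
Qed.

Lemma gseq_le_succ lam n : 0 < lam < 1 -> gseq lam n <= gseq lam (S n).
Proof.
  intro Hlam; unfold gseq, wgeom; rewrite S_INR; assert (0 <= INR n) by apply pos_INR.
  apply Rmult_le_compat; try (left; apply Rpower_gt0); apply Rle_Rpower_l; lra.
Qed.

Lemma gseq_succ lam n : aluthge_weight weight lam n ^ 2 * gseq lam n = gseq lam (S n).
Proof.
  assert (0 <= INR n) by apply pos_INR.
  assert (Hsq : forall x p, 0 < x -> Rpower x p ^ 2 = Rpower (x ^ 2) p)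
    by (intros; simpl; rewrite !Rmult_1_r; apply Rpower_mult_distr; assumption).
  assert (Hquot : forall x y p, 0 < x -> 0 < y -> Rpower (x / y) p * Rpower y p = Rpower x p)
    by (intros; rewrite Rpower_mult_distr by (try apply Rdiv_lt_0_compat; assumption);
        f_equal; field; lra).
  unfold aluthge_weight, gseq, wgeom; rewrite !rpow_pos_eq by apply weight_pos.
  rewrite Rpow_mult_distr, !Hsq by apply weight_pos; rewrite !weight_sqr, !S_INR.
  replace (INR n + 1 + 1) with (INR n + 2) by ring.
  replace (INR n + 1 + 2) with (INR n + 3) by ring.
  rewrite <- (Hquot (INR n + 2) (INR n + 1) (1 - lam)), <- (Hquot (INR n + 3) (INR n + 2) lam)
    by lra.
  ring.
Qed.

Lemma gseq_wprod lam j k :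
  wprod (aluthge_weight weight lam) j k ^ 2 * gseq lam j = gseq lam (j + k).
Proof.
  induction k as [|k IH]; simpl wprod; [rewrite Nat.add_0_r; ring|].
  rewrite Nat.add_succ_r, <- gseq_succ, <- IH; ring.
Qed.

Lemma fdiff_gseq_of_m_isometry lam m D : 0 < lam < 1 ->
  is_aluthge lam (wshift weight) D -> m_isometry m D -> forall j, fdiff m (gseq lam) j = 0.
Proof.
  intros Hlam HD Hiso j.
  assert (Hb := fun k =>
    aluthge_wshift_basis weight 2 weight_pos weight_le2 weight_inj lam D k Hlam HD).
  unfold fdiff; rewrite <- (Rmult_0_r (gseq lam j)),
    <- (m_isometry_weighted_basis m D _ Hiso Hb j), scal_sum.
  apply sum_eq; intros k _; rewrite <- gseq_wprod; ring.
Qed.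

Theorem mainTheorem9 :
  exists T : op, bounded_op T /\ m_isometry 2 T /\
    forall lam : R, 0 < lam < 1 ->
      (exists D, is_aluthge lam T D) /\
      forall (m : nat) (D : op), (2 <= m)%nat -> is_aluthge lam T D -> ~ m_isometry m D.
Proof.
  exists (wshift weight); split; [exact (bounded_wshift weight 2 weight_pos weight_le2)|split].
  - apply (two_isometry_wshift weight 2 weight_pos weight_le2); intro n.
    rewrite !weight_sqr, S_INR; assert (0 <= INR n) by apply pos_INR; field; lra.
  - intros lam Hlam; split.
    + exists (aluthge_wshift weight lam).
      apply (is_aluthge_wshift weight 2 weight_pos weight_le2); lra.
    + intros m D Hm HD Hiso.
      apply (fdiff_not_zero_of_concave (gseq lam) m); [| |exact Hm|].
      * intro n; apply gseq_concave, Hlam.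
      * intro n; apply gseq_le_succ, Hlam.
      * exact (fdiff_gseq_of_m_isometry lam m D Hlam HD Hiso).
Qed.
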